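(* Let $a:[0,\infty)\to\mathbb{R}$ satisfy $c_1\le a(r)\le c_2$ for all $r\ge0$ (constants $0<c_1\le c_2$) and $|a(r_1)-a(r_2)|\le L_a|r_1-r_2|$ for all $r_1,r_2\ge0$ (constant $L_a>0$). For $x_1,\dots,x_N\in\mathbb{R}^d$ set $\phi_{ij}=\frac{a(\|x_i-x_j\|)}{\sum_{k=1}^Na(\|x_i-x_k\|)}$. Then \[ |\phi_{il}-\phi_{jl}|\le\|\phi\|_{\mathrm{Lip}}\|x_i-x_j\|\qquad\text{for all } i,j,l\in\{1,\dots,N\}, \] where $\|\phi\|_{\mathrm{Lip}}:=\frac{L_a}{Nc_1}\left(1+\frac{c_2}{c_1}\right)$.
   Context: $\|\cdot\|$ denotes the Euclidean norm on $\mathbb{R}^d$. *)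

From HB Require Import structures.
From mathcomp Require Import all_boot all_order all_algebra.
Set Implicit Arguments. Unset Strict Implicit. Unset Printing Implicit Defensive.
Import Order.TTheory GRing.Theory Num.Theory.
Local Open Scope ring_scope.

Definition enorm (R : rcfType) (d : nat) (v : 'rV[R]_d) : R :=
  Num.sqrt (\sum_(k < d) (v ord0 k) ^+ 2).

Definition phi (R : rcfType) (d N : nat) (a : R -> R) (x : 'I_N -> 'rV[R]_d)
  (i j : 'I_N) : R :=
  a (enorm (x i - x j)) / \sum_(k < N) a (enorm (x i - x k)).

Definition phi_Lip (R : rcfType) (N : nat) (c1 c2 La : R) : R :=
  La / (N%:R * c1) * (1 + c2 / c1).

From HB Require Import structures.
From mathcomp Require Import all_boot all_order all_algebra.
From mathcomp Require Import ring lra.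
Import Order.TTheory GRing.Theory Num.Theory.
Local Open Scope ring_scope.

(* Write w_ik = a(|x_i - x_k|) and S_i = sum_k w_ik.  By the reverse triangle
   inequality and the Lipschitz bound on a, |w_ik - w_jk| <= L_a |x_i - x_j| for
   every k; hence |S_i - S_j| <= N L_a |x_i - x_j|, while S_i, S_j >= N c_1.
   Splitting w_il/S_i - w_jl/S_j = (w_il - w_jl)/S_i + w_jl (S_j - S_i)/(S_i S_j)
   bounds the first term by L_a |x_i - x_j| / (N c_1) and the second by c_2/c_1
   times that. *)

Lemma sum_mul_sqr_le {R : realDomainType} {I : finType} (f g : I -> R) :
  (\sum_i f i * g i) ^+ 2 <= (\sum_i f i ^+ 2) * (\sum_i g i ^+ 2).
Proof.
have lagrange :
    ((\sum_i f i ^+ 2) * (\sum_i g i ^+ 2) - (\sum_i f i * g i) ^+ 2) *+ 2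
  = \sum_i \sum_j (f i * g j - f j * g i) ^+ 2.
  have swap : (\sum_i f i ^+ 2) * (\sum_i g i ^+ 2)
            = \sum_i \sum_j f j ^+ 2 * g i ^+ 2.
    rewrite mulrC big_distrlr; apply: eq_bigr => i _.
    by apply: eq_bigr => j _; rewrite mulrC.
  rewrite mulrnBl mulr2n {1}swap big_distrlr expr2 big_distrlr -!big_split /=.
  rewrite -sumrMnl -sumrB; apply: eq_bigr => i _.
  rewrite -sumrMnl -big_split -sumrB /=; apply: eq_bigr => j _; ring.
rewrite -subr_ge0 -(pmulrn_lge0 _ (isT : (0 < 2)%N)) lagrange.
by apply: sumr_ge0 => i _; apply: sumr_ge0 => j _; apply: sqr_ge0.
Qed.

Section EuclideanNorm.
Context {R : rcfType} {d : nat}.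
Implicit Types u v : 'rV[R]_d.

Lemma enorm_ge0 u : 0 <= enorm u.
Proof. exact: sqrtr_ge0. Qed.

Lemma sqr_enorm u : enorm u ^+ 2 = \sum_k u ord0 k ^+ 2.
Proof. by rewrite sqr_sqrtr // sumr_ge0 // => k _; apply: sqr_ge0. Qed.

Lemma enormN u : enorm (- u) = enorm u.
Proof. by rewrite /enorm; congr Num.sqrt; apply: eq_bigr => k _; rewrite mxE sqrrN. Qed.

Lemma sum_mul_le_enorm u v : \sum_k u ord0 k * v ord0 k <= enorm u * enorm v.
Proof.
rewrite /enorm -sqrtrM ?sumr_ge0 // => [|k _]; last exact: sqr_ge0.
by rewrite (le_trans (ler_norm _)) // -sqrtr_sqr ler_wsqrtr // sum_mul_sqr_le.
Qed.

Lemma ler_enormD u v : enorm (u + v) <= enorm u + enorm v.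
Proof.
rewrite -[leRHS]ger0_norm ?addr_ge0 ?enorm_ge0 // -sqrtr_sqr ler_wsqrtr //.
have -> : \sum_k (u + v) ord0 k ^+ 2
        = \sum_k u ord0 k ^+ 2 + \sum_k v ord0 k ^+ 2
          + (\sum_k u ord0 k * v ord0 k) *+ 2.
  rewrite -sumrMnl -!big_split /=; apply: eq_bigr => k _; rewrite mxE; ring.
by rewrite -!sqr_enorm; have := sum_mul_le_enorm u v; lra.
Qed.

Lemma ler_dist_enorm u v : `|enorm u - enorm v| <= enorm (u - v).
Proof.
have := ler_enormD (u - v) v; have := ler_enormD (v - u) u.
by rewrite !subrK -opprB enormN ler_norml; lra.
Qed.

End EuclideanNorm.

Lemma ler_dist_ratio {R : realFieldType} {p q s t m e f : R} :
  0 < m -> m <= s -> m <= t -> 0 <= q ->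
  `|p - q| <= e -> q * `|s - t| <= f ->
  `|p / s - q / t| <= e / m + f / (m * m).
Proof.
move=> m_gt0 ms mt q_ge0 pq_le qst_le.
have s_gt0 := lt_le_trans m_gt0 ms; have t_gt0 := lt_le_trans m_gt0 mt.
have -> : p / s - q / t = (p - q) / s + q * (t - s) / (s * t).
  by field; rewrite !gt_eqF.
apply: le_trans (ler_normD _ _) (lerD _ _).
  rewrite normrM normfV (gtr0_norm s_gt0).
  by apply: ler_pM => //; rewrite ?invr_ge0 ?lef_pV2 ?posrE // ltW.
rewrite normrM normfV normrM (ger0_norm q_ge0) distrC.
rewrite (gtr0_norm (mulr_gt0 s_gt0 t_gt0)).
apply: ler_pM => //.
- by rewrite mulr_ge0.
- by rewrite invr_ge0 ltW ?mulr_gt0.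
by rewrite lef_pV2 ?posrE ?mulr_gt0 //; apply: ler_pM => //; apply: ltW.
Qed.

Lemma ler_dist_normalized {R : realFieldType} {I : finType} (u v : I -> R)
    (c1 c2 e : R) (l : I) :
  0 < c1 -> (forall k, c1 <= u k) -> (forall k, c1 <= v k <= c2) ->
  (forall k, `|u k - v k| <= e) ->
  `|u l / \sum_k u k - v l / \sum_k v k|
    <= e / (#|I|%:R * c1) * (1 + c2 / c1).
Proof.
move=> c1_gt0 u_ge v_bd uv_le; set n : R := #|I|%:R.
have n_gt0 : 0 < n by rewrite ltr0n; apply/card_gt0P; exists l.
have sum_ge (w : I -> R) : (forall k, c1 <= w k) -> n * c1 <= \sum_k w k.
  have -> : n * c1 = \sum_(k : I) c1 by rewrite sumr_const mulr_natl.
  by move=> w_ge; apply: ler_sum.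
have sum_dist : `|\sum_k u k - \sum_k v k| <= n * e.
  have -> : n * e = \sum_(k : I) e by rewrite sumr_const mulr_natl.
  by rewrite -sumrB (le_trans (ler_norm_sum _ _ _)) // ler_sum.
have v_ge k : c1 <= v k by case/andP: (v_bd k).
have /andP [_ vl_le] := v_bd l.
have vl_ge0 : 0 <= v l := le_trans (ltW c1_gt0) (v_ge l).
have weighted_dist : v l * `|\sum_k u k - \sum_k v k| <= c2 * (n * e).
  by apply: ler_pM.
apply: le_trans (ler_dist_ratio _ (sum_ge _ u_ge) (sum_ge _ v_ge) vl_ge0
  (uv_le l) weighted_dist) _; first by rewrite mulr_gt0.
by rewrite le_eqVlt; apply/predU1P; left; field; rewrite !gt_eqF.
Qed.

Theorem lemma3p1 (R : rcfType) (d N : nat) (a : R -> R) (c1 c2 La : R)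
  (hc1 : 0 < c1) (hc12 : c1 <= c2) (hLa : 0 < La)
  (ha_bd : forall r : R, 0 <= r -> c1 <= a r <= c2)
  (ha_lip : forall r1 r2 : R, 0 <= r1 -> 0 <= r2 ->
     `|a r1 - a r2| <= La * `|r1 - r2|)
  (x : 'I_N -> 'rV[R]_d) :
  forall i j l : 'I_N,
    `|phi a x i l - phi a x j l| <= phi_Lip N c1 c2 La * enorm (x i - x j).
Proof.
(* [hc12] is redundant: it is [ha_bd 0]. *)
move=> i j l.
have weight_dist k : `|a (enorm (x i - x k)) - a (enorm (x j - x k))|
                     <= La * enorm (x i - x j).
  apply: le_trans (ha_lip _ _ (enorm_ge0 _) (enorm_ge0 _)) _.
  rewrite ler_pM2l // (le_trans (ler_dist_enorm _ _)) //.
  by rewrite opprB addrA subrK.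
have weight_bd y k : c1 <= a (enorm (y - x k)) <= c2.
  exact/ha_bd/enorm_ge0.
have weight_ge y k : c1 <= a (enorm (y - x k)) by case/andP: (weight_bd y k).
have -> : phi_Lip N c1 c2 La * enorm (x i - x j)
        = La * enorm (x i - x j) / (#|'I_N|%:R * c1) * (1 + c2 / c1).
  by rewrite /phi_Lip card_ord; ring.
exact: ler_dist_normalized hc1 (weight_ge _) (weight_bd _) weight_dist.
Qed.
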